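(* The synthesis problem in $\lambda_H$ is undecidable: there is no algorithm that, given a finite component library $\Lambda$ (over a finite set of type constructors) and a ground query type $t$, decides whether there exists a normal-form term $E$ with $\cdot\vdash E:t$.
   Context: Fix a set of type constructors, each with a fixed arity, and an infinite set of type variables. Base types are $B ::= \tau \mid C\,B_1\ldots B_k$; ground base types $b$ contain no type variables. Types are $T ::= B\mid B\to T$; ground types $t ::= b\mid b\to t$. A polytype is $\forall\tau_1\ldots\tau_n.T$. A component library $\Lambda$ is a finite map from component names $c$ to polytypes; the arity of $c$ is the number of arrows in $\Lambda(c)$. A substitution $\sigma$ maps type variables to base types (identity elsewhere). Terms ($\lambda_H$, η-long): application terms $e::=x\mid c(e_1,\ldots,e_m)$ with $m$ the arity of $c$; normal-form terms $E::=e\mid\lambda x.E$. A typing environment $\Gamma$ maps variables to ground base types. Declarative typing $\Gamma\vdash E:t$: (Var) if $\Gamma(x)=b$ then $\Gamma\vdash x:b$; (App) if $\Lambda(c)=\forall\bar\tau.T$, $\sigma T=b_1\to\cdots\to b_m\to b$ is ground and $\Gamma\vdash e_i:b_i$ for all $i$, then $\Gamma\vdash c(e_1,\ldots,e_m):b$; (Fun) if $\Gamma,x{:}b\vdash E:t$ then $\Gamma\vdash\lambda x.E:b\to t$. A synthesis problem is a pair $(\Lambda,t)$ and a solution is a normal-form term $E$ with $\cdot\vdash E:t$. *)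

From mathcomp Require Import all_boot.
Set Implicit Arguments. Unset Strict Implicit. Unset Printing Implicit Defensive.

(* A type constructor is identified by
   its name c : nat together with its number of arguments, so every constructor
   has a fixed arity (the constructor set is nat * nat; any finite signature
   embeds into it). *)
Inductive btype : Type :=
| TVar (tau : nat)
| TCon (c : nat) (args : seq btype).

Fixpoint bground (B : btype) : bool :=
  match B with
  | TVar _ => false
  | TCon _ args => all bground args
  end.

(* T ::= B | B -> T, represented as (B1 :: ... :: Bm, B) for B1 -> ... -> Bm -> B. *)
Definition ty := (seq btype * btype)%type.

Definition tground (T : ty) : bool := all bground T.1 && bground T.2.

Definition subst := nat -> btype.

Fixpoint bsubst (s : subst) (B : btype) : btype :=
  match B with
  | TVar tau => s tau
  | TCon c args => TCon c (map (bsubst s) args)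
  end.

Definition tsubst (s : subst) (T : ty) : ty := (map (bsubst s) T.1, bsubst s T.2).

(* A component library: component named i has polytype (nth i) ; the polytype
   forall tau1..taun. T is represented by T (all its variables are the
   quantified ones; the rule (App) instantiates them by an arbitrary
   substitution). *)
Definition library := seq ty.

Inductive aterm : Type :=
| AVar (x : nat)
| AApp (c : nat) (args : seq aterm).

Inductive nterm : Type :=
| NA (e : aterm)
| NLam (x : nat) (E : nterm).

Definition env := nat -> option btype.
Definition env0 : env := fun _ => None.
Definition env_ext (G : env) (x : nat) (b : btype) : env :=
  fun y => if y == x then Some b else G y.

Inductive atyped (L : library) (G : env) : aterm -> btype -> Prop :=
| ATy_Var x b : G x = Some b -> atyped L G (AVar x) b
| ATy_App c T (s : subst) (es : seq aterm) :
    onth L c = Some T ->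
    tground (tsubst s T) ->
    size es = size T.1 ->
    (forall i, i < size es ->
       atyped L G (nth (AVar 0) es i) (nth (TVar 0) (tsubst s T).1 i)) ->
    atyped L G (AApp c es) (tsubst s T).2.

Inductive ntyped (L : library) : env -> nterm -> ty -> Prop :=
| NTy_A G e b : atyped L G e b -> ntyped L G (NA e) ([::], b)
| NTy_Lam G x E b bs r :
    ntyped L (env_ext G x b) E (bs, r) -> ntyped L G (NLam x E) (b :: bs, r).

Definition solvable (L : library) (t : ty) : Prop :=
  exists E : nterm, ntyped L env0 E t.

Fixpoint enc_b (B : btype) : GenTree.tree nat :=
  match B with
  | TVar tau => GenTree.Node 0 [:: GenTree.Leaf tau]
  | TCon c args => GenTree.Node 1 (GenTree.Leaf c :: map enc_b args)
  end.

Definition enc_ty (T : ty) : GenTree.tree nat :=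
  GenTree.Node 2 (enc_b T.2 :: map enc_b T.1).

Definition enc_instance (L : library) (t : ty) : GenTree.tree nat :=
  GenTree.Node 3 (enc_ty t :: map enc_ty L).

Definition code (L : library) (t : ty) : nat := pickle (enc_instance L t).

Inductive instr : Type :=
| INC (r : nat)
| DEC (r : nat) (j : nat).

Definition program := seq instr.
Definition config := (nat * (nat -> nat))%type.

Definition upd (R : nat -> nat) (r v : nat) : nat -> nat :=
  fun q => if q == r then v else R q.

Definition step (p : program) (c : config) : config :=
  let: (pc, R) := c in
  match onth p pc with
  | None => c
  | Some (INC r) => (pc.+1, upd R r (R r).+1)
  | Some (DEC r j) =>
      match R r with
      | 0 => (j, R)
      | k.+1 => (pc.+1, upd R r k)
      end
  end.

Definition halted (p : program) (c : config) : bool := size p <= c.1.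

Definition init (n : nat) : config := (0, fun q => if q == 0 then n else 0).

Definition rm_outputs (p : program) (n v : nat) : Prop :=
  exists k, halted p (iter k (step p) (init n)) /\ (iter k (step p) (init n)).2 0 = v.

Definition decides_synthesis (p : program) : Prop :=
  forall (L : library) (t : ty), tground t ->
    (solvable L t -> rm_outputs p (code L t) 1) /\
    (~ solvable L t -> rm_outputs p (code L t) 0).

From mathcomp Require Import all_boot.
From Stdlib Require List.
Set Implicit Arguments. Unset Strict Implicit. Unset Printing Implicit Defensive.

(* A diagonal argument.  A register machine p is turned into a library [lib p] in
   which inhabitation of base types behaves like a logic program: the type
   [conf_ty c] is inhabited exactly when p, run from configuration c, halts with 0
   in register 0, and further components compute, on unary numerals, the binary
   arithmetic behind the codes of problem instances.  The query [Goal (tnum M)] is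
   inhabited iff p halts with 0 on [goal_code M], and [goal_code M] is the code of
   that very query once M is the code of the part of its encoding after the
   numeral; that part lists the library and does not depend on M.  For this M the
   query is solvable iff p answers that it is not. *)

Fixpoint all_prop (T : Type) (P : T -> Prop) (s : seq T) : Prop :=
  if s is x :: s' then P x /\ all_prop P s' else True.

Lemma all_propP (T : Type) (P : T -> Prop) (x0 : T) (s : seq T) :
  all_prop P s <-> forall i, i < size s -> P (nth x0 s i).
Proof.
elim: s => [|x s IH] //=; split=> [[Px /IH Ps] [|i] //|Ps]; first exact: Ps.
by split; [exact: (Ps 0) | apply/IH => i; apply: (Ps i.+1)].
Qed.

Lemma In_onth (T : Type) (x : T) (s : seq T) :
  List.In x s <-> exists i, onth s i = Some x.
Proof.
elim: s => [|y s IH] /=; first by split=> // -[[|i]].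
split=> [[->|/IH [i s_i]]|[[|i] /= s_i]]; first by exists 0.
- by exists i.+1.
- by left; case: s_i.
- by right; apply/IH; exists i.
Qed.

Lemma In_cat (T : Type) (x : T) (s1 s2 : seq T) :
  List.In x (s1 ++ s2) <-> List.In x s1 \/ List.In x s2.
Proof. by elim: s1 => [|y s1 IH] /=; [tauto | rewrite IH; tauto]. Qed.

Lemma In_flatten_mkseq (T : Type) (f : nat -> seq T) (n : nat) (x : T) :
  List.In x (flatten (mkseq f n)) <-> exists2 i, i < n & List.In x (f i).
Proof.
elim: n => [|n IH]; first by split=> // [[]].
rewrite mkseqS flatten_rcons In_cat IH.
split=> [[[i lt_in fi_x]|fn_x]|[i]]; first by exists i; first exact: ltnW.
  by exists n.
by rewrite ltnS leq_eqVlt => /predU1P [-> | lt_in fi_x]; [right | left; exists i].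
Qed.

Lemma onth_nth_lt (T : Type) (x0 : T) (s : seq T) (i : nat) :
  i < size s -> onth s i = Some (nth x0 s i).
Proof. by move=> lt_is; rewrite onthE (nth_map x0). Qed.

(** * Register machines *)

Definition halts_with (p : program) (c : config) (v : nat) : Prop :=
  exists k, halted p (iter k (step p) c) /\ (iter k (step p) c).2 0 = v.

Section Machines.
Variable p : program.

Lemma step_halted (c : config) : halted p c -> step p c = c.
Proof. by case: c => pc R; rewrite /halted /step /= => /onth_default ->. Qed.

Lemma iter_halted (c : config) (k n : nat) :
  halted p (iter k (step p) c) -> iter (n + k) (step p) c = iter k (step p) c.
Proof. by move=> halted_k; elim: n => //= n ->; apply: step_halted. Qed.

Lemma halts_with_inj (c : config) (v w : nat) :
  halts_with p c v -> halts_with p c w -> v = w.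
Proof.
case=> [k [halted_k <-]] [l [halted_l <-]].
by rewrite -(iter_halted l halted_k) -(iter_halted k halted_l) addnC.
Qed.

Lemma halts_with_step (c : config) (v : nat) :
  halts_with p (step p c) v -> halts_with p c v.
Proof. by case=> k halts; exists k.+1; rewrite iterSr. Qed.

Definition same_config (c d : config) : Prop := c.1 = d.1 /\ c.2 =1 d.2.

Lemma step_same (c d : config) : same_config c d -> same_config (step p c) (step p d).
Proof.
case: c d => pc R [_ R'] [/= <- eqR]; rewrite /step.
case: onth => [[r|r j]|] //=; first by split=> //= q; rewrite /upd !eqR.
by rewrite eqR; case: (R' r) => [|n] //; split=> //= q; rewrite /upd eqR.
Qed.

Lemma halts_with_ext (pc : nat) (R R' : nat -> nat) (v : nat) :
  R =1 R' -> halts_with p (pc, R) v -> halts_with p (pc, R') v.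
Proof.
move=> eqR [k halts]; exists k.
have [same_pc same_R] :
    same_config (iter k (step p) (pc, R)) (iter k (step p) (pc, R')).
  by elim: k {halts} => [|k /step_same //]; split.
by rewrite /halted -same_pc -same_R.
Qed.

End Machines.

(** * Derivability of base types *)

Fixpoint btype_nested_ind (P : btype -> Prop)
    (HV : forall tau, P (TVar tau))
    (HC : forall c args, (forall x, List.In x args -> P x) -> P (TCon c args))
    (b : btype) : P b :=
  match b with
  | TVar tau => HV tau
  | TCon c args => HC c args
      ((fix in_args (s : seq btype) : forall x, List.In x s -> P x :=
          match s with
          | [::] => fun x x_in => False_ind _ x_in
          | y :: s' => fun x x_in =>
              match x_in with
              | or_introl y_x => eq_ind y P (btype_nested_ind HV HC y) x y_x
              | or_intror x_in' => in_args s' x x_in'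
              end
          end) args)
  end.

Lemma bground_bsubst (s : subst) (B : btype) :
  (forall tau, bground (s tau)) -> bground (bsubst s B).
Proof.
move=> ground_s; elim/btype_nested_ind: B => //= c args.
elim: args => //= A args IH ground_args; rewrite ground_args /=; last by left.
by apply: IH => x x_in; apply: ground_args; right.
Qed.

Lemma tground_tsubst (s : subst) (T : ty) :
  (forall tau, bground (s tau)) -> tground (tsubst s T).
Proof.
move=> ground_s; rewrite /tground /= bground_bsubst // andbT.
by elim: T.1 => //= A As ->; rewrite bground_bsubst.
Qed.

Definition derivable (L : library) (b : btype) : Prop :=
  exists e, atyped L env0 e b.

Definition rule_closed (P : btype -> Prop) (T : ty) : Prop :=
  forall s, all_prop (fun A => P (bsubst s A)) T.1 -> P (bsubst s T.2).

Lemma derivable_rule (L : library) (T : ty) (s : subst) :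
  List.In T L -> (forall tau, bground (s tau)) ->
  all_prop (fun A => derivable L (bsubst s A)) T.1 -> derivable L (bsubst s T.2).
Proof.
case/In_onth=> c L_c ground_s premises.
have [es [size_es typed_es]] : exists es, size es = size T.1 /\
    forall i, i < size T.1 ->
      atyped L env0 (nth (AVar 0) es i) (bsubst s (nth (TVar 0) T.1 i)).
  elim: T.1 premises {L_c} => [|A As IH] /=; first by exists [::].
  case=> [[e typed_e] /IH [es [size_es typed_es]]].
  exists (e :: es); split=> [|[|i] /= lt_i]; first by rewrite /= size_es.
    exact: typed_e.
  exact: typed_es.
exists (AApp c es); apply: ATy_App L_c (tground_tsubst _ ground_s) (size_es) _ => i.
by rewrite size_es => lt_i; rewrite /tsubst /= (nth_map (TVar 0)) //; apply: typed_es.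
Qed.

Lemma derivable_ind (L : library) (P : btype -> Prop) :
  (forall T, List.In T L -> rule_closed P T) -> forall b, derivable L b -> P b.
Proof.
move=> closed b [e]; elim=> [x b' //|c T s es L_c _ size_es _ IH].
apply: (closed T) => //; first by apply/In_onth; exists c.
apply/(all_propP _ (TVar 0)) => i; rewrite -size_es => lt_i.
by have := IH i lt_i; rewrite /tsubst /= (nth_map (TVar 0)) // -size_es.
Qed.

Lemma solvable_base (L : library) (b : btype) :
  solvable L ([::], b) <-> derivable L b.
Proof.
split=> [[E typed_E]|[e typed_e]]; last by exists (NA e); constructor.
by inversion typed_E; exists e.
Qed.

Definition Zt : btype := TCon 0 [::].
Definition St (x : btype) : btype := TCon 1 [:: x].

Fixpoint tnum (n : nat) : btype := if n is m.+1 then St (tnum m) else Zt.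

Fixpoint tval (b : btype) : nat :=
  if b is TCon 1 [:: x] then (tval x).+1 else 0.

Lemma tnumK : cancel tnum tval. Proof. by elim=> //= n ->. Qed.

Lemma bsubst_tnum (s : subst) (n : nat) : bsubst s (tnum n) = tnum n.
Proof. by elim: n => //= n ->. Qed.

Lemma bground_tnum (n : nat) : bground (tnum n).
Proof. by elim: n => //= n ->. Qed.

Lemma bsubst_iterS (s : subst) (n : nat) (x : btype) :
  bsubst s (iter n St x) = iter n St (bsubst s x).
Proof. by elim: n => //= n ->. Qed.

Lemma tval_iterS (n : nat) (x : btype) : tval (iter n St x) = n + tval x.
Proof. by elim: n => //= n ->. Qed.

Lemma iterS_tnum (n m : nat) : iter n St (tnum m) = tnum (n + m).
Proof. by elim: n => //= n ->. Qed.

Definition numsub (vs : seq nat) : subst := fun tau => tnum (nth 0 vs tau).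

Lemma derivable_num_rule (L : library) (T : ty) (vs : seq nat) :
  List.In T L -> all_prop (fun A => derivable L (bsubst (numsub vs) A)) T.1 ->
  derivable L (bsubst (numsub vs) T.2).
Proof. by move=> L_T; apply: derivable_rule L_T _ => tau; apply: bground_tnum. Qed.

(** * Codes of synthesis problems *)

(* The step of [CodeSeq.code], which [pickle] uses for trees. *)
Definition push (n m : nat) : nat := 2 ^ n * m.*2.+1.
Arguments push : simpl never.

(* Locked because evaluating [pickle] on a concrete symbol is hopelessly slow, and
   tactics would otherwise try to. *)
Definition symcode : nat + nat -> nat := locked pickle.

Definition pushes (s : seq (nat + nat)) (m : nat) : nat := foldr push m (map symcode s).

Lemma pushes_cat (s1 s2 : seq (nat + nat)) (m : nat) :
  pushes (s1 ++ s2) m = pushes s1 (pushes s2 m).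
Proof. by rewrite /pushes map_cat foldr_cat. Qed.

Lemma pickle_tree (t : GenTree.tree nat) : pickle t = pushes (GenTree.encode t) 0.
Proof. by rewrite /pushes /symcode -lock. Qed.

Definition numcode (n : nat) : seq (nat + nat) := GenTree.encode (enc_b (tnum n)).

Lemma numcode0 : numcode 0 = [:: inl 2; inr 0; inl 0].
Proof. by []. Qed.

Lemma numcodeS (n : nat) : numcode n.+1 = [:: inl 2; inr 1] ++ numcode n ++ [:: inl 0].
Proof. by rewrite /numcode /= cats0 cats1. Qed.

Definition Goal (x : btype) : btype := TCon 7 [:: x].

(* The symbols of [GenTree.encode (enc_instance L ([::], Goal x))] before and after
   those of [x]. *)
Definition goal_prefix : seq (nat + nat) := [:: inl 4; inl 3; inl 2; inr 7].

Definition goal_suffix (L : library) : seq (nat + nat) :=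
  [:: inl 0; inl 0] ++ flatten [seq GenTree.encode (enc_ty T) | T <- L] ++ [:: inl 0].

Definition self_code (L : library) : nat := pushes (goal_suffix L) 0.

Definition goal_code (M : nat) : nat := pushes goal_prefix (pushes (numcode M) M).

Lemma code_self_goal (L : library) :
  code L ([::], Goal (tnum (self_code L))) = goal_code (self_code L).
Proof.
have encode_query x : GenTree.encode (enc_instance L ([::], Goal x)) =
    goal_prefix ++ GenTree.encode (enc_b x) ++ goal_suffix L.
  by rewrite /= !cats0 -!cats1 -!catA /= -map_comp.
by rewrite /code pickle_tree encode_query 2!pushes_cat.
Qed.

(** * A library simulating a register machine *)

Local Notation V := TVar.

Definition Double (a b : btype) : btype := TCon 2 [:: a; b].
Definition Shift (k a b : btype) : btype := TCon 3 [:: k; a; b].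
Definition Push (k a b : btype) : btype := TCon 4 [:: k; a; b].
Definition PushNum (x a b : btype) : btype := TCon 5 [:: x; a; b].

Definition Conf (K : nat) (pc : btype) (g : nat -> btype) : btype :=
  TCon 6 (pc :: mkseq g K.+1).

Lemma bsubst_Conf (K : nat) (s : subst) (pc : btype) (g : nat -> btype)
    (R : nat -> nat) :
  (forall q, q <= K -> bsubst s (g q) = tnum (R q)) ->
  bsubst s (Conf K pc g) = Conf K (bsubst s pc) (tnum \o R).
Proof.
have bsubst_TCon c args : bsubst s (TCon c args) = TCon c (map (bsubst s) args) by [].
move=> g_R; rewrite /Conf bsubst_TCon map_cons /mkseq -map_comp.
by congr (TCon 6 (_ :: _)); apply/eq_in_map => q; rewrite mem_iota ltnS => /andP [_ /g_R].
Qed.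

Definition tsym (x : nat + nat) : btype := tnum (symcode x).

Lemma bsubst_tsym (s : subst) (x : nat + nat) : bsubst s (tsym x) = tsym x.
Proof. exact: bsubst_tnum. Qed.

Definition double_zero : ty := ([::], Double Zt Zt).
Definition double_succ : ty :=
  ([:: Double (V 0) (V 1)], Double (St (V 0)) (St (St (V 1)))).
Definition shift_zero : ty := ([::], Shift Zt (V 0) (V 0)).
Definition shift_succ : ty :=
  ([:: Double (V 1) (V 3); Shift (V 0) (V 3) (V 2)], Shift (St (V 0)) (V 1) (V 2)).
Definition push_rule : ty :=
  ([:: Double (V 1) (V 3); Shift (V 0) (St (V 3)) (V 2)], Push (V 0) (V 1) (V 2)).
Definition pushnum_zero : ty :=
  ([:: Push (tsym (inl 0)) (V 0) (V 2); Push (tsym (inr 0)) (V 2) (V 3);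
       Push (tsym (inl 2)) (V 3) (V 1)],
   PushNum Zt (V 0) (V 1)).
Definition pushnum_succ : ty :=
  ([:: Push (tsym (inl 0)) (V 1) (V 3); PushNum (V 0) (V 3) (V 4);
       Push (tsym (inr 1)) (V 4) (V 5); Push (tsym (inl 2)) (V 5) (V 2)],
   PushNum (St (V 0)) (V 1) (V 2)).

Definition arith_rules : library := [:: double_zero; double_succ; shift_zero;
  shift_succ; push_rule; pushnum_zero; pushnum_succ].

Definition init_regs (x : btype) (q : nat) : btype := if q == 0 then x else Zt.

Definition goal_rule (K : nat) : ty :=
  ([:: PushNum (V 0) (V 0) (V 1); Push (tsym (inr 7)) (V 1) (V 2);
       Push (tsym (inl 2)) (V 2) (V 3); Push (tsym (inl 3)) (V 3) (V 4);
       Push (tsym (inl 4)) (V 4) (V 5); Conf K Zt (init_regs (V 5))],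
   Goal (V 0)).

Definition inc_reg (r q : nat) : btype := if q == r then St (V q) else V q.
Definition zero_reg (r q : nat) : btype := if q == r then Zt else V q.

(* Any program counter [pc >= n], as [n] successors of a variable distinct from
   the register variables. *)
Definition halt_rule (K n : nat) : ty :=
  ([::], Conf K (iter n St (V K.+1)) (zero_reg 0)).

Definition instr_rules (K i : nat) (ins : instr) : library :=
  match ins with
  | INC r => [:: ([:: Conf K (tnum i.+1) (inc_reg r)], Conf K (tnum i) V)]
  | DEC r j => [:: ([:: Conf K (tnum j) (zero_reg r)], Conf K (tnum i) (zero_reg r));
                   ([:: Conf K (tnum i.+1) V], Conf K (tnum i) (inc_reg r))]
  end.

Definition ireg (ins : instr) : nat := match ins with INC r => r | DEC r _ => r end.
Definition maxreg (p : program) : nat := foldr (fun ins m => maxn (ireg ins) m) 0 p.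

Lemma ireg_le_maxreg (p : program) (i : nat) (ins : instr) :
  onth p i = Some ins -> ireg ins <= maxreg p.
Proof.
elim: p i => [|ins' p IH] [|i] //= => [[<-]|/IH le_maxreg]; first exact: leq_maxl.
by rewrite (leq_trans le_maxreg) ?leq_maxr.
Qed.

Definition machine_rules (p : program) : library :=
  flatten (mkseq (fun i => instr_rules (maxreg p) i (nth (INC 0) p i)) (size p)).

Definition lib (p : program) : library :=
  [:: goal_rule (maxreg p); halt_rule (maxreg p) (size p)] ++ arith_rules
    ++ machine_rules p.

Section Soundness.
Variable p : program.
Local Notation K := (maxreg p).

Definition regs_of (rs : seq btype) (q : nat) : nat := tval (nth Zt rs q).

Definition sem (b : btype) : Prop :=
  match b with
  | TCon 2 [:: a; b] => tval b = (tval a).*2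
  | TCon 3 [:: k; a; b] => tval b = 2 ^ tval k * tval a
  | TCon 4 [:: k; a; b] => tval b = push (tval k) (tval a)
  | TCon 5 [:: x; a; b] => tval b = pushes (numcode (tval x)) (tval a)
  | TCon 6 (pc :: rs) => halts_with p (tval pc, regs_of rs) 0
  | TCon 7 [:: x] => halts_with p (init (goal_code (tval x))) 0
  | _ => True
  end.

Lemma sem_Push_sym (s : subst) (x : nat + nat) (a b : btype) :
  sem (bsubst s (Push (tsym x) a b)) =
  (tval (bsubst s b) = push (symcode x) (tval (bsubst s a))).
Proof. by rewrite /= bsubst_tnum tnumK. Qed.

Lemma sem_Conf (s : subst) (pc : btype) (g : nat -> btype) :
  sem (bsubst s (Conf K pc g)) <->
  halts_with p (tval (bsubst s pc), fun q => if q <= K then tval (bsubst s (g q)) else 0) 0.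
Proof.
have regs_mkseq q : regs_of (map (bsubst s) (mkseq g K.+1)) q =
    if q <= K then tval (bsubst s (g q)) else 0.
  rewrite /regs_of; case: leqP => [le_qK | lt_Kq].
    by rewrite (nth_map Zt) ?nth_mkseq ?size_mkseq.
  by rewrite nth_default // size_map size_mkseq.
by split; apply: halts_with_ext => q; rewrite regs_mkseq.
Qed.

Lemma arith_closed (T : ty) : List.In T arith_rules -> rule_closed sem T.
Proof.
case=> [<-|[<-|[<-|[<-|[<-|[<-|[<-|[]]]]]]]] s //.
- by case=> /= ->.
- by rewrite /= mul1n.
- by case=> /= double_1 [-> _]; rewrite double_1 expnS -mul2n mulnCA mulnA.
- by case=> /= double_1 [-> _] /=; rewrite double_1.
- case; rewrite !sem_Push_sym /= => push1 [push2 [push3 _]].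
  by rewrite numcode0 push3 push2 push1.
- case; rewrite !sem_Push_sym /= => push1 [push_num [push2 [push3 _]]].
  by rewrite numcodeS !pushes_cat push3 push2 push_num push1.
Qed.

Lemma goal_closed : rule_closed sem (goal_rule K).
Proof.
move=> s [push_num [+ [+ [+ [+ [/sem_Conf halts _]]]]]].
rewrite !sem_Push_sym /= => push1 push2 push3 push4.
apply: halts_with_ext halts => q; rewrite /init_regs.
case: eqP => [->|_]; last by case: ifP.
by rewrite leq0n push4 push3 push2 push1 push_num.
Qed.

Lemma halt_closed : rule_closed sem (halt_rule K (size p)).
Proof.
move=> s _; apply/sem_Conf; exists 0.
by rewrite /halted /= bsubst_iterS tval_iterS leq_addr.
Qed.

Lemma instr_closed (i : nat) (T : ty) : i < size p ->
  List.In T (instr_rules K i (nth (INC 0) p i)) -> rule_closed sem T.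
Proof.
move=> lt_ip; have p_i := onth_nth_lt (INC 0) lt_ip; have := ireg_le_maxreg p_i.
case: (nth (INC 0) p i) p_i => [r|r j] p_i; rewrite [ireg _]/= => le_rK.
- case=> [<-|[]] s [/sem_Conf + _]; rewrite !bsubst_tnum !tnumK => halts.
  apply/sem_Conf; rewrite bsubst_tnum tnumK; apply: halts_with_step; rewrite /step p_i.
  apply: halts_with_ext halts => q; rewrite /upd /inc_reg.
  by case: eqP => [->|_]; rewrite ?le_rK.
- case=> [<-|[<-|[]]] s [/sem_Conf + _]; rewrite !bsubst_tnum !tnumK => halts;
    apply/sem_Conf; rewrite bsubst_tnum tnumK; apply: halts_with_step;
    rewrite /step p_i /= le_rK /zero_reg /inc_reg eqxx //=.
  apply: halts_with_ext halts => q; rewrite /upd.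
  by case: eqP => [->|_]; rewrite ?le_rK.
Qed.

Lemma lib_sound (b : btype) : derivable (lib p) b -> sem b.
Proof.
apply: (derivable_ind (P := sem)) => T /In_cat [[<-|[<-|[]]]|/In_cat [|]].
- exact: goal_closed.
- exact: halt_closed.
- exact: arith_closed.
- by case/In_flatten_mkseq=> i; apply: instr_closed.
Qed.

End Soundness.

Section Completeness.
Variable p : program.
Local Notation K := (maxreg p).
Local Notation L := (lib p).

Lemma arith_in_lib (T : ty) : List.In T arith_rules -> List.In T L.
Proof. by move=> arith_T; apply/In_cat; right; apply/In_cat; left. Qed.

Ltac arith_rule := apply: arith_in_lib; rewrite /=; do ?[left; reflexivity | right].

Lemma derivable_double (n : nat) : derivable L (Double (tnum n) (tnum n.*2)).
Proof.
elim: n => [|n IH].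
  by apply: (derivable_num_rule (T := double_zero) (vs := [::])); first arith_rule.
by apply: (derivable_num_rule (T := double_succ) (vs := [:: n; n.*2])); first arith_rule.
Qed.

Lemma derivable_shift (k a : nat) :
  derivable L (Shift (tnum k) (tnum a) (tnum (2 ^ k * a))).
Proof.
elim: k a => [|k IH] a.
  rewrite expn0 mul1n.
  by apply: (derivable_num_rule (T := shift_zero) (vs := [:: a])); first arith_rule.
have -> : 2 ^ k.+1 * a = 2 ^ k * a.*2 by rewrite expnS -mul2n mulnCA mulnA.
apply: (derivable_num_rule (T := shift_succ) (vs := [:: k; a; 2 ^ k * a.*2; a.*2])).
  by arith_rule.
by split; [apply: derivable_double | split; first apply: IH].
Qed.

Lemma derivable_push (k a : nat) : derivable L (Push (tnum k) (tnum a) (tnum (push k a))).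
Proof.
apply: (derivable_num_rule (T := push_rule) (vs := [:: k; a; push k a; a.*2])).
  by arith_rule.
by split; [apply: derivable_double | split; first exact: (derivable_shift k (a.*2).+1)].
Qed.

Lemma derivable_push_sym (vs : seq nat) (x : nat + nat) (i j : nat) :
  nth 0 vs j = push (symcode x) (nth 0 vs i) ->
  derivable L (bsubst (numsub vs) (Push (tsym x) (V i) (V j))).
Proof. by move=> vs_j; rewrite /= bsubst_tsym /numsub vs_j; apply: derivable_push. Qed.

Lemma derivable_pushnum (x a : nat) :
  derivable L (PushNum (tnum x) (tnum a) (tnum (pushes (numcode x) a))).
Proof.
elim: x a => [|x IH] a.
  set a1 := push (symcode (inl 0)) a; set a2 := push (symcode (inr 0)) a1.
  apply: (derivable_num_rule (T := pushnum_zero)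
    (vs := [:: a; pushes (numcode 0) a; a1; a2])); first by arith_rule.
  by do 3 (split; first exact: derivable_push_sym).
set a1 := push (symcode (inl 0)) a; set a2 := pushes (numcode x) a1.
set a3 := push (symcode (inr 1)) a2.
have -> : pushes (numcode x.+1) a = push (symcode (inl 2)) a3.
  by rewrite numcodeS !pushes_cat.
apply: (derivable_num_rule (T := pushnum_succ)
  (vs := [:: x; a; push (symcode (inl 2)) a3; a1; a2; a3])); first by arith_rule.
split; first exact: derivable_push_sym.
split; first exact: IH.
by do 2 (split; first exact: derivable_push_sym).
Qed.

Definition conf_ty (c : config) : btype := Conf K (tnum c.1) (tnum \o c.2).

Lemma derivable_conf_rule (pc pc' : nat) (g g' : nat -> btype) (S R R' : nat -> nat) :
  List.In ([:: Conf K (tnum pc') g'], Conf K (tnum pc) g) L ->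
  (forall q, q <= K -> bsubst (tnum \o S) (g q) = tnum (R q)) ->
  (forall q, q <= K -> bsubst (tnum \o S) (g' q) = tnum (R' q)) ->
  derivable L (conf_ty (pc', R')) -> derivable L (conf_ty (pc, R)).
Proof.
move=> rule_in g_R g'_R' derivable'.
rewrite /conf_ty /= -(bsubst_tnum (tnum \o S) pc) -(bsubst_Conf _ g_R).
apply: derivable_rule rule_in _ _ => [tau|]; first exact: bground_tnum.
by split=> //; rewrite (bsubst_Conf _ g'_R') bsubst_tnum.
Qed.

Lemma derivable_conf_step (c : config) :
  ~~ halted p c -> derivable L (conf_ty (step p c)) -> derivable L (conf_ty c).
Proof.
case: c => pc R; rewrite /halted -ltnNge /= => lt_pc.
have p_pc := onth_nth_lt (INC 0) lt_pc; have := ireg_le_maxreg p_pc.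
have rule_in T : List.In T (instr_rules K pc (nth (INC 0) p pc)) -> List.In T L.
  move=> instr_T; apply/In_cat; right; apply/In_cat; right.
  by apply/In_flatten_mkseq; exists pc.
rewrite /step p_pc; case: (nth (INC 0) p pc) rule_in => [r|r j] rule_in /= le_rK.
- apply: (derivable_conf_rule (S := R) (rule_in _ (or_introl erefl))) => // q _.
  by rewrite /inc_reg /upd; case: eqP => [->|].
- case R_r: (R r) => [|m].
    apply: (derivable_conf_rule (S := R) (rule_in _ (or_introl erefl))) => q _;
      rewrite /zero_reg; case: eqP => [->|] //; by rewrite R_r.
  apply: (derivable_conf_rule (S := upd R r m) (rule_in _ (or_intror (or_introl erefl))))
    => // q _.
  rewrite /inc_reg /upd; case: eqP => [->|/eqP/negbTE neq_qr] /=.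
    by rewrite eqxx R_r.
  by rewrite neq_qr.
Qed.

Lemma derivable_conf_halted (c : config) :
  halted p c -> c.2 0 = 0 -> derivable L (conf_ty c).
Proof.
case: c => pc R; rewrite /conf_ty /= => halted_pc R_0.
pose S q := if q <= K then R q else pc - size p.
have S_R q : q <= K -> bsubst (tnum \o S) (zero_reg 0 q) = tnum (R q).
  by move=> le_qK; rewrite /zero_reg; case: eqP => [->|_] /=; rewrite ?R_0 // /S le_qK.
have -> : tnum pc = bsubst (tnum \o S) (iter (size p) St (V K.+1)).
  by rewrite bsubst_iterS /= /S ltnn iterS_tnum subnKC.
rewrite -(bsubst_Conf _ S_R).
apply: (derivable_rule (T := halt_rule K (size p))) => [|tau|//]; last exact: bground_tnum.
by apply/In_cat; left; right; left.
Qed.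

Lemma derivable_conf (c : config) : halts_with p c 0 -> derivable L (conf_ty c).
Proof.
case=> k; elim: k c => [|k IH] c [halted_k out_k]; first exact: derivable_conf_halted.
have [halted_c | running_c] := boolP (halted p c).
  apply: derivable_conf_halted (halted_c) _.
  by move: out_k; rewrite -[k.+1]addn0 (@iter_halted p c 0 k.+1 halted_c).
by apply: derivable_conf_step running_c (IH _ _); rewrite -iterSr.
Qed.

Lemma derivable_goal (M : nat) :
  halts_with p (init (goal_code M)) 0 -> derivable L (Goal (tnum M)).
Proof.
set v1 := pushes (numcode M) M; set v2 := push (symcode (inr 7)) v1.
set v3 := push (symcode (inl 2)) v2; set v4 := push (symcode (inl 3)) v3.
move=> /derivable_conf halts.
apply: (derivable_num_rule (T := goal_rule K) (vs := [:: M; v1; v2; v3; v4; goal_code M])).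
  by apply/In_cat; left; left.
split; first exact: derivable_pushnum.
do 4 (split; first by apply: derivable_push_sym; reflexivity).
split=> //; rewrite (@bsubst_Conf K _ _ _ (init (goal_code M)).2); first exact halts.
by move=> q _; rewrite /init_regs /=; case: eqP.
Qed.

End Completeness.

Theorem mainTheorem13 : ~ (exists p : program, decides_synthesis p).
Proof.
case=> p decides; set M := self_code (lib p).
pose query : ty := ([::], Goal (tnum M)).
have ground_query : tground query by rewrite /tground /= bground_tnum.
have [yes no] := decides (lib p) query ground_query.
have solvable_query : solvable (lib p) query <-> rm_outputs p (code (lib p) query) 0.
  rewrite solvable_base code_self_goal; split=> [/lib_sound | /derivable_goal //].
  by rewrite /= tnumK.
have unsolvable : ~ solvable (lib p) query.
  by move=> solved; have := halts_with_inj (yes solved) (solvable_query.1 solved).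
exact/unsolvable/solvable_query.2/no.
Qed.
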